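(* In the setting of the switching procedure below (with $\lambda=\Theta(\log n)$, $k=\Theta(\lambda\log n)$) and with $D:=\frac{2en\ln n}{k}$, consider the moment when the $(1+1)$ EA phase first holds an individual at distance at most $D$ from the optimum. The expected number of further $(1+1)$ EA iterations until the procedure switches to the $(1+(\lambda,\lambda))$ GA (or finds the optimum) is $O(n\log\log n)$.
   Context: The procedure maximizes $\mathrm{OneMax}(x)=\sum_{i=1}^n x_i$ on $\{0,1\}^n$ (optimum $1^n$; distance = number of zero-bits). It starts from a uniformly random point and runs the $(1+1)$ EA (each iteration: create one offspring by flipping each bit independently with probability $1/n$, accept it if its fitness is at least the current one) until, for the first time, $k$ consecutive $(1+1)$ EA iterations fail to create a strictly better offspring; then it switches irrevocably to the $(1+(\lambda,\lambda))$ GA with population size $\lambda$. Here $\lambda=\lambda(n)=\Theta(\log n)$ and $k=k(n)=\Theta(\lambda\log n)$. *)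

From HB Require Import structures.
From mathcomp Require Import all_boot all_order all_algebra.
From mathcomp Require Import all_classical all_reals all_analysis.
Set Implicit Arguments. Unset Strict Implicit. Unset Printing Implicit Defensive.
Import Order.TTheory GRing.Theory Num.Theory.
Local Open Scope ring_scope.

Definition bits (n : nat) := {ffun 'I_n -> bool}.

(* OneMax value (number of one-bits) and distance to the optimum 1^n
   (number of zero-bits). *)
Definition onemax (n : nat) (x : bits n) : nat := #|[set i | x i]|.
Definition zeros (n : nat) (x : bits n) : nat := #|[set i | ~~ x i]|.

Definition ham (n : nat) (x y : bits n) : nat := #|[set i | x i != y i]|.

(* Standard bit mutation with rate 1/n: probability that parent x
   produces offspring y. *)
Definition mutP (R : realType) (n : nat) (x y : bits n) : R :=
  (n%:R^-1) ^+ ham x y * (1 - n%:R^-1) ^+ (n - ham x y).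

(* State of the (1+1) EA phase of the switching procedure with switching
   threshold K: the current individual and the number of consecutive
   iterations (since the last strict improvement) without strict improvement. *)
Definition state (n K : nat) := (bits n * 'I_K.+1)%type.

(* The phase is over once K consecutive non-improving iterations occurred
   (switch to the (1+(lambda,lambda)) GA), or the optimum has been found. *)
Definition absorbed (n K : nat) (s : state n K) : bool :=
  (val s.2 == K) || (zeros s.1 == 0%N).

(* Successor state when the offspring is y (elitist acceptance of ties). *)
Definition next_state (n K : nat) (s : state n K) (y : bits n) : state n K :=
  if (onemax s.1 < onemax y)%N then (y, ord0)
  else if onemax y == onemax s.1 then (y, inord (val s.2).+1)
  else (s.1, inord (val s.2).+1).

(* One-step transition kernel, killed on absorbed states. *)
Definition trans (R : realType) (n K : nat) (s s' : state n K) : R :=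
  if absorbed s then 0
  else \sum_(y : bits n) mutP R s.1 y * (next_state s y == s')%:R.

(* Sub-probability distribution at time t of the not-yet-stopped process. *)
Fixpoint distr (R : realType) (n K : nat) (s0 : state n K) (t : nat)
  : {ffun state n K -> R} :=
  match t with
  | 0 => [ffun s => (s == s0)%:R]
  | t'.+1 => [ffun s' => \sum_(s : state n K) distr R s0 t' s * trans R s s']
  end.

(* P(T > t), where T is the number of (1+1) EA iterations until the
   phase ends (switch or optimum found), started from s0. *)
Definition surv (R : realType) (n K : nat) (s0 : state n K) (t : nat) : R :=
  \sum_(s : state n K | ~~ absorbed s) distr R s0 t s.

(* E[T] = sum_{t >= 0} P(T > t), as an extended real (possibly +oo). *)
Definition expected_time (R : realType) (n K : nat) (s0 : state n K) : \bar R :=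
  (\sum_(0 <= t <oo) (surv R s0 t)%:E)%E.

From HB Require Import structures.
From mathcomp Require Import all_boot all_order all_algebra.
From mathcomp Require Import all_classical all_reals all_analysis.
From mathcomp Require Import ring lra zify.
Import Order.TTheory GRing.Theory Num.Theory.
Local Open Scope ring_scope.
Set Implicit Arguments. Unset Strict Implicit. Unset Printing Implicit Defensive.

(* A potential-function argument.  Let [a = e n] and let [d] be the number of zero
   bits.  Flipping exactly one of the [d] zero bits improves the fitness, so an
   improvement has probability at least [d / a]; hence a level with [j] non-improving
   steps left before the switch costs at most [min j (a / d)] further steps.  The
   potential of a state is this bound for the current level plus [min K (a / i)] for
   every lower level [i < d]; it drops by at least one in expectation per step, so it
   bounds the expected stopping time.  Finally
   [sum_(i <= d) min K (a / i) <= 2 a ln (1 + d K / a)], and at distance at most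
   [D = 2 e n ln n / K] we have [d K / a <= 2 ln n], giving [4 e n ln ln n]. *)

Section BitStrings.
Variable n : nat.

Lemma onemax_add_zeros (x : bits n) : (onemax x + zeros x)%N = n.
Proof.
rewrite /onemax /zeros -[RHS]card_ord -(cardsC [set i | x i]).
by congr addn; apply: eq_card => i; rewrite !inE.
Qed.

Definition flip (x : bits n) (i : 'I_n) : bits n :=
  [ffun j => if j == i then ~~ x j else x j].

Lemma ham_flip (x : bits n) i : ham x (flip x i) = 1%N.
Proof.
rewrite /ham -(cards1 i); apply: eq_card => j; rewrite !inE ffunE.
by case: (j == i); case: (x j).
Qed.

Lemma onemax_flip (x : bits n) i : ~~ x i -> onemax (flip x i) = (onemax x).+1.
Proof.
move=> xi; rewrite /onemax.
have -> : [set j | flip x i j] = i |: [set j | x j].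
  apply/setP => j; rewrite !inE ffunE.
  by case: (eqVneq j i) => [->|]; rewrite ?xi.
by rewrite cardsU1 inE xi.
Qed.

Lemma flip_inj (x : bits n) : injective (flip x).
Proof.
move=> i j /ffunP /(_ i); rewrite !ffunE eqxx.
by case: (eqVneq i j) => // _; case: (x i).
Qed.

End BitStrings.

Section Mutation.
Variables (R : realType) (n : nat).
Let p : R := n%:R^-1.

Lemma mut_rate_le1 : p <= 1.
Proof. by rewrite /p; case: n => [|m]; rewrite ?invr0 ?ler01 ?invf_le1 ?ler1n. Qed.

Lemma mutP_ge0 (x y : bits n) : 0 <= mutP R x y.
Proof.
by rewrite /mutP mulr_ge0 // exprn_ge0 // ?invr_ge0 // subr_ge0 mut_rate_le1.
Qed.

Lemma mutP_prod (x y : bits n) :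
  mutP R x y = \prod_i (if x i != y i then p else 1 - p).
Proof.
rewrite (bigID (fun i => x i != y i)) /=.
rewrite (eq_bigr (fun _ => p)); last by move=> i ->.
rewrite [X in _ * X](eq_bigr (fun _ => 1 - p)); last by move=> i /negbTE ->.
rewrite !prodr_const /mutP /ham; congr (_ ^+ _ * _ ^+ _); first by rewrite cardsE.
set S := [set i | x i != y i].
have := cardsC S; rewrite card_ord => /(congr1 (subn^~ #|S|)).
by rewrite addKn => <-; apply: eq_card => i; rewrite !inE.
Qed.

(* Summing the product form over all [y] factors into one Bernoulli sum per bit. *)
Lemma mutP_sum1 (x : bits n) : \sum_(y : bits n) mutP R x y = 1.
Proof.
rewrite (eq_bigr _ (fun y _ => mutP_prod x y)).
rewrite -(bigA_distr_bigA (fun i b => if x i != b then p else 1 - p)) /=.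
rewrite big1 // => i _; rewrite big_bool /=.
by case: (x i) => /=; [rewrite subrK | rewrite addrC subrK].
Qed.

(* [(1 - 1/n)^(n-1) = (1 + 1/(n-1))^-(n-1) >= e^-1] because [1 + t <= e^t]. *)
Lemma flip_prob_ge : (expR 1 * n%:R)^-1 <= p * (1 - p) ^+ n.-1.
Proof.
rewrite /p; case: n => [|m]; first by rewrite mulr0 !invr0 mul0r.
rewrite invfM mulrC ler_pM2l ?invr_gt0 ?ltr0n //=; case: m => [|m].
  by rewrite expr0 invf_le1 ?expR_gt0 // -expR0 ler_expR.
have m_gt0 : (0 < m.+1%:R :> R) by rewrite ltr0n.
have -> : 1 - (m.+2%:R)^-1 = (1 + (m.+1%:R)^-1)^-1 :> R.
  rewrite -[m.+2]addn1 natrD; field.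
  by apply/andP; split; rewrite lt0r_neq0 // ltr_wpDl.
rewrite exprVn lef_pV2 ?posrE ?expR_gt0 ?exprn_gt0 ?ltr_wpDl ?invr_ge0 //.
apply: (@le_trans _ _ (expR ((m.+1%:R)^-1) ^+ m.+1)).
  by rewrite lerXn2r ?nnegrE ?expR_ge0 ?expR_ge1Dx // addr_ge0 ?invr_ge0.
by rewrite -expRM_natl mulfV ?lt0r_neq0.
Qed.

(* The [zeros x] flips of a single zero bit are distinct improving offspring. *)
Lemma improvement_prob_ge (x : bits n) :
  (zeros x)%:R * (p * (1 - p) ^+ n.-1) <=
  \sum_(y : bits n | (onemax x < onemax y)%N) mutP R x y.
Proof.
have mutP_flip i : mutP R x (flip x i) = p * (1 - p) ^+ n.-1.
  by rewrite /mutP ham_flip expr1 subn1.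
have -> : (zeros x)%:R * (p * (1 - p) ^+ n.-1) =
    \sum_(i in [set i | ~~ x i]) mutP R x (flip x i).
  by rewrite (eq_bigr _ (fun i _ => mutP_flip i)) sumr_const mulr_natl.
rewrite -big_imset /=; last by move=> i j _ _; apply: flip_inj.
rewrite big_mkcond [X in _ <= X]big_mkcond /=; apply: ler_sum => y _.
case: ifP => [/imsetP [i] | _]; last by case: ifP => _ //; apply: mutP_ge0.
by rewrite inE => xi ->; rewrite onemax_flip // ltnSn.
Qed.

Lemma nonimprovement_prob_le (x : bits n) :
  \sum_(y : bits n | ~~ (onemax x < onemax y)%N) mutP R x y <=
  1 - (zeros x)%:R / (expR 1 * n%:R).
Proof.
have := mutP_sum1 x.
rewrite (bigID (fun y => (onemax x < onemax y)%N)) /= => sum1.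
rewrite -[X in X - _]sum1 addrAC -[X in X <= _]add0r lerD2r subr_ge0.
apply: le_trans (improvement_prob_ge x).
by rewrite ler_wpM2l ?ler0n ?flip_prob_ge.
Qed.

End Mutation.

Section KilledChain.
Variables (R : realType) (n K : nat).

Lemma trans_ge0 (s s' : state n K) : 0 <= trans R s s'.
Proof.
rewrite /trans; case: ifP => // _; apply: sumr_ge0 => y _.
by rewrite mulr_ge0 ?mutP_ge0.
Qed.

Lemma distr_ge0 (s0 : state n K) t s : 0 <= distr R s0 t s.
Proof.
elim: t s => [|t IH] s /=; rewrite ffunE //.
by apply: sumr_ge0 => s' _; rewrite mulr_ge0 ?trans_ge0.
Qed.

Lemma surv_ge0 (s0 : state n K) t : 0 <= surv R s0 t.
Proof. by apply: sumr_ge0 => s _; apply: distr_ge0. Qed.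

Lemma sum_transE (f : state n K -> R) (s : state n K) : ~~ absorbed s ->
  \sum_s' trans R s s' * f s' = \sum_(y : bits n) mutP R s.1 y * f (next_state s y).
Proof.
move=> live; rewrite /trans (negbTE live).
under eq_bigr do rewrite mulr_suml.
rewrite exchange_big /=; apply: eq_bigr => y _.
rewrite (bigD1 (next_state s y)) //= eqxx mulr1 big1 ?addr0 // => s' /negbTE.
by rewrite eq_sym => ->; rewrite mulr0 mul0r.
Qed.

Section Potential.
Variable V : state n K -> R.
Hypothesis V_ge0 : forall s, 0 <= V s.
Hypothesis V_drift : forall s, ~~ absorbed s -> 1 + \sum_s' trans R s s' * V s' <= V s.

Let mean_potential s0 t := \sum_s distr R s0 t s * V s.

Lemma mean_potential_step s0 t :
  mean_potential s0 t.+1 + surv R s0 t <= mean_potential s0 t.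
Proof.
have -> : mean_potential s0 t.+1 =
    \sum_s distr R s0 t s * \sum_s' trans R s s' * V s'.
  rewrite /mean_potential /=.
  under eq_bigr do rewrite ffunE mulr_suml.
  rewrite exchange_big /=; apply: eq_bigr => s _; rewrite mulr_sumr.
  by apply: eq_bigr => s' _; rewrite mulrA.
rewrite (bigID (@absorbed n K)) /= big1 ?add0r; last first.
  move=> s dead; rewrite big1 ?mulr0 // => s' _.
  by rewrite /trans dead mul0r.
rewrite /surv -big_split /= /mean_potential [X in _ <= X](bigID (@absorbed n K)) /=.
apply: ler_wpDl; first by apply: sumr_ge0 => s _; rewrite mulr_ge0 ?distr_ge0.
apply: ler_sum => s live.
by rewrite -[X in _ + X]mulr1 -mulrDr ler_wpM2l ?distr_ge0 // addrC V_drift.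
Qed.

Lemma sum_surv_le T s0 : \sum_(0 <= t < T) surv R s0 t <= V s0.
Proof.
have : \sum_(0 <= t < T) surv R s0 t + mean_potential s0 T <= V s0.
  elim: T => [|T IH].
    rewrite big_geq // add0r /mean_potential (bigD1 s0) //= ffunE eqxx mul1r.
    by rewrite big1 ?addr0 // => s /negbTE; rewrite ffunE => ->; rewrite mul0r.
  rewrite big_nat_recr //=; apply: le_trans IH.
  by rewrite -addrA lerD2l addrC mean_potential_step.
apply: le_trans; rewrite lerDl.
by apply: sumr_ge0 => s _; rewrite mulr_ge0 ?distr_ge0.
Qed.

Lemma expected_time_le_potential s0 : (expected_time R s0 <= (V s0)%:E)%E.
Proof.
apply: lime_le; first by apply: is_cvg_nneseries => t _ _; rewrite lee_fin surv_ge0.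
by apply: nearW => T; rewrite sumEFin lee_fin sum_surv_le.
Qed.

End Potential.
End KilledChain.

Lemma min_le_harmonic (R : realFieldType) (u v : R) : 0 < u -> 0 < v ->
  Num.min u v <= 2 * u * v / (u + v).
Proof.
move=> u_gt0 v_gt0; have uv_gt0 : 0 < u + v by rewrite addr_gt0.
by rewrite ler_pdivlMr //; have [uv | vu] := leP u v; nra.
Qed.

Lemma ln_diff_ge (R : realType) (x y : R) : 0 < x -> 0 < y ->
  (y - x) / y <= ln y - ln x.
Proof.
move=> x_gt0 y_gt0; have q_gt0 : 0 < x / y by rewrite divr_gt0.
have h : ln (x / y) <= x / y - 1.
  have := @le_ln1Dx R (x / y - 1); rewrite addrCA subrr addr0; apply.
  by rewrite -[X in X < _]sub0r ltrD2r.
rewrite lnM ?posrE ?invr_gt0 // lnV ?posrE // in h.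
rewrite mulrBl divff ?gt_eqF //; set q := x / y in h *; lra.
Qed.

Section LevelCost.
Variables (R : realType) (a : R).

(* [a / d] is the mean waiting time for an improvement at [d] zeros when [a = e n]. *)
Definition level_cost (j d : nat) : R := Num.min j%:R (a / d%:R).

Definition levels_cost (K j : nat) : R := \sum_(0 <= i < j) level_cost K i.+1.

Lemma level_cost_ge0 j d : 0 <= a -> 0 <= level_cost j d.
Proof. by move=> a_ge0; rewrite /level_cost le_min ler0n divr_ge0. Qed.

Lemma levels_cost_ge0 K j : 0 <= a -> 0 <= levels_cost K j.
Proof. by move=> a_ge0; apply: sumr_ge0 => i _; apply: level_cost_ge0. Qed.

Lemma levels_costS K j : levels_cost K j.+1 = levels_cost K j + level_cost K j.+1.
Proof. by rewrite /levels_cost big_nat_recr. Qed.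

Lemma levels_cost_mono K : 0 <= a -> {homo levels_cost K : i j / (i <= j)%N >-> i <= j}.
Proof.
move=> a_ge0 i j /subnK <-; elim: (j - i)%N => // m IH.
by rewrite addSn levels_costS; apply: le_trans IH _; rewrite lerDl level_cost_ge0.
Qed.

(* One more step of budget pays for the current step, whatever the improvement
   probability [p >= d / a] turns out to be: if [j + 1 <= a / d] the budget is the
   binding term, otherwise [a / d * (1 - d / a) = a / d - 1]. *)
Lemma level_cost_drift j d : (0 < d)%N -> d%:R <= a ->
  1 + level_cost j d * (1 - d%:R / a) <= level_cost j.+1 d.
Proof.
move=> d_gt0 d_le_a; have d_pos : 0 < d%:R :> R by rewrite ltr0n.
set u := a / d%:R.
have u_ge1 : 1 <= u by rewrite /u ler_pdivlMr // mul1r.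
have u_gt0 : 0 < u by apply: lt_le_trans u_ge1.
have -> : d%:R / a = u^-1 by rewrite /u invf_div.
have v_ge0 : 0 <= 1 - u^-1 by rewrite subr_ge0 invf_le1.
have v_le1 : 1 - u^-1 <= 1 by rewrite lerBlDr lerDl invr_ge0 ltW.
have cost_ge0 : 0 <= Num.min j%:R u by rewrite le_min ler0n ltW.
rewrite /level_cost -/u; case: (leP j.+1%:R u) => [jS_le_u | u_lt_jS].
  have min_le_j : Num.min j%:R u <= j%:R by rewrite ge_min lexx.
  rewrite -natr1 addrC lerD2r; apply: le_trans min_le_j.
  by rewrite ler_piMr.
apply: (@le_trans _ _ (1 + u * (1 - u^-1))).
  by rewrite lerD2l ler_wpM2r // ge_min lexx orbT.
by rewrite mulrBr mulr1 mulfV ?gt_eqF // addrC subrK.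
Qed.

Lemma levels_cost_le_ln K j : 0 < a -> (0 < K)%N ->
  levels_cost K j <= 2 * a * ln (1 + j%:R * K%:R / a).
Proof.
move=> a_gt0 K_gt0; have K_pos : 0 < K%:R :> R by rewrite ltr0n.
pose f i := ln (1 + i%:R * K%:R / a).
have f_pos i : 0 < 1 + i%:R * K%:R / a
  by rewrite (lt_le_trans ltr01) // lerDl divr_ge0 ?mulr_ge0 // ltW.
have -> : ln (1 + j%:R * K%:R / a) = \sum_(0 <= i < j) (f i.+1 - f i).
  by rewrite telescope_sumr // /f mul0r mul0r addr0 ln1 subr0.
rewrite mulr_sumr; apply: ler_sum => i _.
apply: le_trans (ler_wpM2l _ (ln_diff_ge (f_pos i) (f_pos i.+1))).
  apply: le_trans (min_le_harmonic K_pos _) _; first by rewrite divr_gt0 ?ltr0n.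
  rewrite le_eqVlt -natr1; apply/orP; left; apply/eqP; field.
  have i_ge0 := ler0n R i; rewrite !gt_eqF //; nra.
by rewrite mulr_ge0 // ltW.
Qed.

End LevelCost.

Lemma live_state (n K : nat) (s : state n K) :
  ~~ absorbed s -> (val s.2 < K)%N /\ (0 < zeros s.1)%N.
Proof.
rewrite /absorbed => /norP [c_neq_K zeros_neq0]; rewrite lt0n zeros_neq0.
by have := ltn_ord s.2; rewrite ltnS leq_eqVlt (negbTE c_neq_K).
Qed.

Section LevelPotential.
Variables (R : realType) (n K : nat) (a : R).
Hypothesis en_le_a : expR 1 * n%:R <= a.

Definition potential (s : state n K) : R :=
  if absorbed s then 0
  else level_cost a (K - val s.2) (zeros s.1) + levels_cost a K (zeros s.1).-1.

Lemma n_le_a : n%:R <= a.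
Proof.
apply: le_trans en_le_a; rewrite ler_peMl ?ler0n //.
by rewrite -expR0 ler_expR.
Qed.

Lemma a_ge0 : 0 <= a.
Proof. exact: le_trans (ler0n R n) n_le_a. Qed.

Lemma potential_ge0 s : 0 <= potential s.
Proof.
rewrite /potential; case: ifP => // _.
by rewrite addr_ge0 ?level_cost_ge0 ?levels_cost_ge0 ?a_ge0.
Qed.

Lemma potential_init (x : bits n) : potential (x, ord0) <= levels_cost a K (zeros x).
Proof.
rewrite /potential; case: ifP => [_|]; first by rewrite levels_cost_ge0 ?a_ge0.
rewrite /absorbed /= subn0 => /norP [_].
by case: (zeros x) => // d _ /=; rewrite levels_costS addrC.
Qed.

Lemma potential_next (s : state n K) (y : bits n) : ~~ absorbed s ->
  potential (next_state s y) <= levels_cost a K (zeros s.1).-1 +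
    (if (onemax s.1 < onemax y)%N then 0
     else level_cost a (K - (val s.2).+1) (zeros s.1)).
Proof.
case: s => x c live; have [c_lt_K _] := live_state live.
have := onemax_add_zeros x; have := onemax_add_zeros y.
rewrite /next_state /=; case: ifP => [improved | _] zeros_y zeros_x.
  rewrite addr0; apply: le_trans (potential_init y) _.
  by apply: levels_cost_mono; [apply: a_ge0 | lia].
have same_level z : zeros z = zeros x ->
    potential (z, inord (val c).+1) <=
    levels_cost a K (zeros x).-1 + level_cost a (K - (val c).+1) (zeros x).
  move=> zeros_z; rewrite /potential; case: ifP => _.
    by rewrite addr_ge0 ?level_cost_ge0 ?levels_cost_ge0 ?a_ge0.
  by rewrite /= inordK ?ltnS // zeros_z addrC.
by case: ifP => [/eqP equal|_]; apply: same_level; lia.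
Qed.

Lemma potential_drift s : ~~ absorbed s ->
  1 + \sum_s' trans R s s' * potential s' <= potential s.
Proof.
move=> live; rewrite sum_transE //.
have [c_lt_K d_gt0] := live_state live.
case: s live c_lt_K d_gt0 => x c /= live c_lt_K d_gt0.
have n_gt0 : (0 < n)%N by have := onemax_add_zeros x; lia.
set d := zeros x in d_gt0 *.
set lower := levels_cost a K d.-1.
set cost := level_cost a (K - (val c).+1) d.
have mean_next : \sum_(y : bits n) mutP R x y * potential (next_state (x, c) y) <=
    lower + cost * \sum_(y : bits n | ~~ (onemax x < onemax y)%N) mutP R x y.
  apply: (@le_trans _ _ (\sum_(y : bits n) mutP R x y *
      (lower + if (onemax x < onemax y)%N then 0 else cost))).
    by apply: ler_sum => y _; rewrite ler_wpM2l ?mutP_ge0 // potential_next.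
  under eq_bigr do rewrite mulrDr.
  rewrite big_split /= -mulr_suml mutP_sum1 mul1r lerD2l mulr_sumr.
  rewrite [X in _ <= X]big_mkcond; apply: ler_sum => y _.
  by case: ifP => /= _; rewrite ?mulr0 // mulrC.
apply: le_trans (lerD (lexx 1) mean_next) _.
have -> : potential (x, c) = level_cost a (K - val c) d + lower.
  by rewrite /potential (negbTE live).
rewrite -(subnSK c_lt_K) addrCA [X in _ <= X]addrC lerD2l.
have d_le_a : d%:R <= a.
  by apply: le_trans n_le_a; rewrite ler_nat /d; have := onemax_add_zeros x; lia.
apply: le_trans _ (level_cost_drift _ d_gt0 d_le_a).
rewrite lerD2l ler_wpM2l ?level_cost_ge0 ?a_ge0 //.
apply: le_trans (nonimprovement_prob_le R x) _.
have en_gt0 : 0 < expR 1 * n%:R :> R by rewrite mulr_gt0 ?expR_gt0 ?ltr0n.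
rewrite lerD2l lerN2 ler_wpM2l ?ler0n // lef_pV2 ?posrE //.
exact: lt_le_trans en_le_a.
Qed.

End LevelPotential.

Lemma ln1D2x_le (R : realType) (x : R) : 3 <= x -> ln (1 + 2 * x) <= 2 * ln x.
Proof.
move=> x_ge3; have x_gt0 : 0 < x by lra.
rewrite [2 * ln x]mulr_natl -lnXn // ler_ln ?posrE ?exprn_gt0 //; last by lra.
by rewrite expr2; nra.
Qed.

Theorem lemma5p3 (R : realType) (lam k : nat -> nat)
  (a1 a2 b1 b2 : R) (N0 : nat) :
  0 < a1 -> 0 < b1 ->
  (forall n : nat, (N0 <= n)%N ->
     a1 * ln (n%:R) <= (lam n)%:R /\ (lam n)%:R <= a2 * ln (n%:R)) ->
  (forall n : nat, (N0 <= n)%N ->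
     b1 * ((lam n)%:R * ln (n%:R)) <= (k n)%:R /\
     (k n)%:R <= b2 * ((lam n)%:R * ln (n%:R))) ->
  exists (C : R) (N : nat), forall n : nat, (N <= n)%N ->
    forall x : bits n,
      (zeros x)%:R <= 2 * expR (1 : R) * n%:R * ln (n%:R) / (k n)%:R ->
      (expected_time R ((x, ord0) : state n (k n))
         <= (C * (n%:R * ln (ln (n%:R))))%:E)%E.
Proof.
move=> _ _ _ _; exists (4 * expR 1), (Num.Def.archi_bound (expR (3 : R))).
move=> n n_large x near_opt.
have n_gt_e3 : expR 3 < n%:R :> R.
  by apply: lt_le_trans (archi_boundP (expR_ge0 3)) _; rewrite ler_nat.
have n_pos : 0 < n%:R :> R by apply: lt_trans n_gt_e3; apply: expR_gt0.
set L := ln n%:R in near_opt *.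
have L_ge3 : 3 <= L by rewrite -[3](expRK (3 : R)) ler_ln ?posrE ?expR_gt0 // ltW.
set a : R := expR 1 * n%:R; set K := k n in near_opt *.
have a_gt0 : 0 < a by rewrite mulr_gt0 ?expR_gt0.
apply: le_trans (expected_time_le_potential (potential_ge0 (lexx a))
  (potential_drift (lexx a)) (x, ord0)) _.
rewrite lee_fin; apply: le_trans (potential_init K (lexx a) x) _.
case: (posnP (zeros x)) => [-> | d_gt0].
  by rewrite /levels_cost big_geq // mulr_ge0 ?mulr_ge0 ?expR_ge0 ?ler0n ?ln_ge0 //; lra.
have K_gt0 : (0 < K)%N.
  case: (posnP K) near_opt => // ->; rewrite invr0 mulr0 => zeros_le0.
  by move: zeros_le0; rewrite leNgt ltr0n d_gt0.
apply: le_trans (levels_cost_le_ln _ a_gt0 K_gt0) _.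
have scaled_dist : (zeros x)%:R * K%:R / a <= 2 * L.
  rewrite ler_pdivrMr // -ler_pdivlMr ?ltr0n //.
  suff -> : 2 * L * a / K%:R = 2 * expR 1 * n%:R * L / K%:R by [].
  by rewrite /a; ring.
have -> : 4 * expR 1 * (n%:R * ln L) = 2 * a * (2 * ln L) by rewrite /a; ring.
rewrite ler_pM2l ?mulr_gt0 //; apply: le_trans (ln1D2x_le L_ge3).
rewrite ler_ln ?posrE ?lerD2l //; last lra.
by rewrite (lt_le_trans ltr01) // lerDl divr_ge0 ?mulr_ge0 // ltW.
Qed.
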